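(* Let $\tilde S\subseteq\mathfrak P$ and let $\tilde O\subseteq\mathcal C_{\mathfrak P}(\tilde S)$ be a finite set. Then $\omega_{\tilde S}(\Pi(\tilde O))\ge\min_{o\in\tilde O}\omega_{\tilde S}(o)$.
   Context: $\mathfrak P$ is the group of $N$-qubit Pauli operators modulo phases; $\mathcal C_{\mathfrak P}(\tilde S)$ is the centralizer of $\tilde S$ in $\mathfrak P$; $\Pi(\tilde O)$ is the product of the elements of $\tilde O$. The weight of a Pauli operator is its number of non-identity tensor factors. For $l\in\mathcal C_{\mathfrak P}(\tilde S)$, $\omega_{\tilde S}(l)$ is the minimum weight of an operator $e\in\mathcal C_{\mathfrak P}(\tilde S)$ that anticommutes with $l$ (an undetectable error acting on $l$), with value $+\infty$ if no such $e$ exists. *)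

From mathcomp Require Import all_boot.
Set Implicit Arguments. Unset Strict Implicit. Unset Printing Implicit Defensive.

(* An N-qubit Pauli operator modulo phases, in the standard binary
   (symplectic) representation: on qubit i the pair (x_i, z_i) encodes
   I = (0,0), X = (1,0), Z = (0,1), Y = (1,1). *)
Definition pauli (N : nat) := {ffun 'I_N -> bool * bool}.

Definition pid (N : nat) : pauli N := [ffun _ => (false, false)].

Definition pmul (N : nat) (p q : pauli N) : pauli N :=
  [ffun i => (xorb (p i).1 (q i).1, xorb (p i).2 (q i).2)].

(* p and q anticommute (as genuine Pauli operators) iff the symplectic
   form sum_i (x_i z'_i + z_i x'_i) is 1 mod 2 *)
Definition anticomm (N : nat) (p q : pauli N) : bool :=
  odd (\sum_(i < N) (((p i).1 && (q i).2) (+) ((p i).2 && (q i).1) : nat)).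

Definition weight (N : nat) (p : pauli N) : nat :=
  #|[set i : 'I_N | p i != (false, false)]|.

Definition centralizer (N : nat) (S : {set pauli N}) : {set pauli N} :=
  [set p | [forall s in S, ~~ anticomm p s]].

(* product of the elements of a finite set (pmul is commutative) *)
Definition prodP (N : nat) (O : {set pauli N}) : pauli N :=
  \big[@pmul N/pid N]_(o in O) o.

(* extended naturals: None = +infinity *)
Definition enat := option nat.
Definition emin (a b : enat) : enat :=
  match a, b with
  | None, _ => b
  | _, None => a
  | Some m, Some n => Some (minn m n)
  end.
Definition ele (a b : enat) : bool :=
  match a, b with
  | _, None => true
  | None, Some _ => false
  | Some m, Some n => m <= n
  end.

Definition omega (N : nat) (S : {set pauli N}) (l : pauli N) : enat :=
  \big[emin/None]_(e in centralizer S | anticomm e l) Some (weight e).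

(* An undetectable error e anticommuting with the product of the elements of O
   must anticommute with at least one factor o, since anticommutation is additive
   in its second argument; hence the weight of e bounds omega(o) from above, and
   omega(prod O) is at least the minimum of the omega(o). *)

From mathcomp Require Import all_boot.

Set Implicit Arguments.
Unset Strict Implicit.
Unset Printing Implicit Defensive.

Lemma odd_sum_nat_of_bool (n : nat) (F : 'I_n -> bool) :
  odd (\sum_(i < n) (F i : nat)) = \big[addb/false]_(i < n) F i.
Proof.
rewrite (big_morph odd (id1:=false) (op1:=addb)) //; last by move=> x y; rewrite oddD.
by apply: eq_bigr => i _; case: (F i).
Qed.

Lemma anticomm_pmul N (e p q : pauli N) :
  anticomm e (pmul p q) = anticomm e p (+) anticomm e q.
Proof.
rewrite /anticomm !odd_sum_nat_of_bool -big_split /=.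
apply: eq_bigr => i _; rewrite /pmul !ffunE /=.
by case: (e i).1; case: (e i).2; case: (p i).1; case: (p i).2; case: (q i).1; case: (q i).2.
Qed.

Lemma anticomm_pid N (e : pauli N) : anticomm e (pid N) = false.
Proof.
rewrite /anticomm odd_sum_nat_of_bool big1 // => i _; rewrite ffunE /=.
by case: (e i).1; case: (e i).2.
Qed.

Lemma anticomm_prodP N (e : pauli N) (O : {set pauli N}) :
  anticomm e (prodP O) = \big[addb/false]_(o in O) anticomm e o.
Proof.
rewrite /prodP (big_morph (anticomm e) (id1:=false) (op1:=addb)) //.
  by move=> p q; rewrite anticomm_pmul.
exact: anticomm_pid.
Qed.

Lemma big_addb_witness (T : finType) (A : {pred T}) (F : T -> bool) :
  \big[addb/false]_(i in A) F i -> exists2 i, i \in A & F i.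
Proof.
have [i /andP [Ai Fi] | noF] := pickP [pred i | (i \in A) && F i].
  by move=> _; exists i.
by rewrite big1 // => i Ai; apply/negbTE; have := noF i; rewrite /= Ai /= => ->.
Qed.

Lemma anticomm_prodP_factor N (e : pauli N) (O : {set pauli N}) :
  anticomm e (prodP O) -> exists2 o, o \in O & anticomm e o.
Proof. by rewrite anticomm_prodP => /big_addb_witness. Qed.

Lemma ele_trans a b c : ele a b -> ele b c -> ele a c.
Proof. by case: a b c => [a|] [b|] [c|] //=; exact: leq_trans. Qed.

Lemma ele_emin x a b : ele x a -> ele x b -> ele x (emin a b).
Proof. by case: x a b => [x|] [a|] [b|] //= xa xb; rewrite leq_min xa xb. Qed.

Lemma emin_elel a b : ele (emin a b) a.
Proof. by case: a b => [a|] [b|] //=; rewrite geq_minl. Qed.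

Lemma emin_eler a b : ele (emin a b) b.
Proof. by case: a b => [a|] [b|] //=; rewrite geq_minr. Qed.

Lemma big_emin_ele (T : finType) (P : pred T) (F : T -> enat) (i : T) :
  P i -> ele (\big[emin/None]_(j | P j) F j) (F i).
Proof.
move=> Pi; rewrite -big_filter.
have : i \in [seq j <- index_enum T | P j] by rewrite mem_filter Pi mem_index_enum.
elim: [seq j <- index_enum T | P j] => // j s IHs.
rewrite in_cons big_cons => /predU1P [<- | i_s]; first exact: emin_elel.
exact: ele_trans (emin_eler _ _) (IHs i_s).
Qed.

Lemma ele_big_emin (T : finType) (P : pred T) (F : T -> enat) (x : enat) :
  (forall i, P i -> ele x (F i)) -> ele x (\big[emin/None]_(i | P i) F i).
Proof.
move=> xF; apply: (big_ind (ele x)) => //; first by case: x {xF}.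
exact: ele_emin.
Qed.

Lemma omega_anticomm_ele N (S : {set pauli N}) (e o : pauli N) :
  e \in centralizer S -> anticomm e o -> ele (omega S o) (Some (weight e)).
Proof.
by move=> eS eo; rewrite /omega; apply: big_emin_ele; rewrite eS eo.
Qed.

Theorem lemma2 (N : nat) (S O : {set pauli N}) :
  O \subset centralizer S ->
  ele (\big[emin/None]_(o in O) omega S o) (omega S (prodP O)).
Proof.
move=> _; apply: ele_big_emin => e /andP [eS eO].
have [o oO eo] := anticomm_prodP_factor eO.
apply: ele_trans (omega_anticomm_ele eS eo).
exact: (big_emin_ele (omega S)).
Qed.
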